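(* Let $\mathcal D$ be universal, $\mathrm M=(M,d)\in\mathfrak U_{\mathcal D}$, and $r\in\mathcal D$, $r>0$, with $(r,2r]\cap\mathcal D=\emptyset$. Then for any three $\sim_r$-equivalence classes $A,B,C$ of $M$, $d_{\min}(B,C)\le d_{\min}(A,B)+d_{\min}(A,C)$; that is, $d_{\min}$ is a metric on the set $M/\!\sim_r$ of equivalence classes.
   Context: $\mathcal D$ is a finite subset of $\mathbb R_{\ge0}$ containing $0$. $\mathfrak U_{\mathcal D}$ is the class of countable homogeneous metric spaces (every isometry between finite subspaces extends to an isometry of the space onto itself) with distance set exactly $\mathcal D$ into which every finite metric space with distances in $\mathcal D$ embeds isometrically; $\mathcal D$ is universal if this class is nonempty. $x\sim_r y$ iff $d(x,y)\le r$ (an equivalence relation under the hypothesis on $r$). For $A,B\subseteq M$, $d_{\min}(A,B)=\min\{d(a,b):a\in A,b\in B\}$. *)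

From Stdlib Require Import Reals List.
Open Scope R_scope.

Definition finite_distance_set (D : R -> Prop) : Prop :=
  (exists l : list R, forall x, D x <-> In x l) /\
  (forall x, D x -> 0 <= x) /\ D 0.

Definition is_metric {M : Type} (d : M -> M -> R) : Prop :=
  (forall x y, d x y = 0 <-> x = y) /\
  (forall x y, d x y = d y x) /\
  (forall x y z, d x z <= d x y + d y z).

Definition countable_type (M : Type) : Prop :=
  exists f : M -> nat, forall x y, f x = f y -> x = y.

Definition distance_set_is {M : Type} (d : M -> M -> R) (D : R -> Prop) : Prop :=
  forall t, D t <-> exists x y, d x y = t.

Definition self_isometry {M : Type} (d : M -> M -> R) (g : M -> M) : Prop :=
  (forall x y, d (g x) (g y) = d x y) /\ (forall y, exists x, g x = y).

(* Homogeneity: every isometry between finite subspaces (given as the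
   correspondence xs_i |-> ys_i of two equally long lists) extends to an
   isometry of M onto itself. *)
Definition homogeneous {M : Type} (d : M -> M -> R) : Prop :=
  forall (xs ys : list M) (x0 : M),
    length xs = length ys ->
    (forall i j, (i < length xs)%nat -> (j < length xs)%nat ->
       d (nth i ys x0) (nth j ys x0) = d (nth i xs x0) (nth j xs x0)) ->
    exists g : M -> M, self_isometry d g /\
      forall i, (i < length xs)%nat -> g (nth i xs x0) = nth i ys x0.

Definition finite_metric_in (D : R -> Prop) (n : nat) (delta : nat -> nat -> R) : Prop :=
  (forall i j, (i < n)%nat -> (j < n)%nat -> (delta i j = 0 <-> i = j)) /\
  (forall i j, (i < n)%nat -> (j < n)%nat -> delta i j = delta j i) /\
  (forall i j k, (i < n)%nat -> (j < n)%nat -> (k < n)%nat ->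
      delta i k <= delta i j + delta j k) /\
  (forall i j, (i < n)%nat -> (j < n)%nat -> D (delta i j)).

Definition universal_for {M : Type} (d : M -> M -> R) (D : R -> Prop) : Prop :=
  forall (n : nat) (delta : nat -> nat -> R), finite_metric_in D n delta ->
    exists f : nat -> M, forall i j, (i < n)%nat -> (j < n)%nat ->
      d (f i) (f j) = delta i j.

Definition in_U {M : Type} (d : M -> M -> R) (D : R -> Prop) : Prop :=
  is_metric d /\ countable_type M /\ homogeneous d /\
  distance_set_is d D /\ universal_for d D.

Definition universal_D (D : R -> Prop) : Prop :=
  finite_distance_set D /\
  exists (M : Type) (d : M -> M -> R), in_U d D.

Definition rclass {M : Type} (d : M -> M -> R) (r : R) (a : M) : M -> Prop :=
  fun x => d x a <= r.

Definition is_dmin {M : Type} (d : M -> M -> R) (A B : M -> Prop) (m : R) : Prop :=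
  (exists a b, A a /\ B b /\ d a b = m) /\
  (forall a b, A a -> B b -> m <= d a b).

(* Since no distance of M lies in (r, 2r], the triangle inequality makes
   [d x y <= r] transitive, so the r-balls are the ~_r classes.  The key point
   is that universality and homogeneity let us complete any three points
   x, y, z to a "parallelogram" x y z w with d(x,w) = d(y,z) and
   d(w,z) = d(x,y).  Take a realising pair a in A, c in C for d_min(A,C), and
   a realising pair a' in A, b in B for d_min(A,B).  Completing a', a, c gives
   w with d(a',w) = d_min(A,C) and d(w,c) = d(a',a) <= r, so w lies in C and
   d_min(B,C) <= d(b,w) <= d_min(A,B) + d_min(A,C). *)
From Stdlib Require Import Reals Lra Lia List Classical.
Open Scope R_scope.

Definition parallelogram_dist (s t m : R) (i j : nat) : R :=
  match i, j with
  | O, S O | S O, O | S (S O), S (S (S O)) | S (S (S O)), S (S O) => s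
  | O, S (S O) | S (S O), O | S O, S (S (S O)) | S (S (S O)), S O => t
  | S O, S (S O) | S (S O), S O | O, S (S (S O)) | S (S (S O)), O => m
  | _, _ => 0
  end.

Lemma parallelogram_dist_metric (D : R -> Prop) (s t m : R) :
  0 < s -> 0 < t -> 0 < m -> s <= t + m -> t <= s + m -> m <= s + t ->
  D s -> D t -> D m -> D 0 -> finite_metric_in D 4 (parallelogram_dist s t m).
Proof.
  intros hs ht hm h1 h2 h3 Ds Dt Dm D0.
  split; [|split; [|split]].
  - intros i j Hi Hj.
    destruct i as [|[|[|[|i]]]]; try lia;
    destruct j as [|[|[|[|j]]]]; try lia; simpl; split; intros; try lra; try lia.
  - intros i j Hi Hj.
    destruct i as [|[|[|[|i]]]]; try lia;
    destruct j as [|[|[|[|j]]]]; try lia; reflexivity.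
  - intros i j k Hi Hj Hk.
    destruct i as [|[|[|[|i]]]]; try lia;
    destruct j as [|[|[|[|j]]]]; try lia;
    destruct k as [|[|[|[|k]]]]; try lia; simpl; lra.
  - intros i j Hi Hj.
    destruct i as [|[|[|[|i]]]]; try lia;
    destruct j as [|[|[|[|j]]]]; try lia; assumption.
Qed.

Section MetricSpace.

Variables (M : Type) (d : M -> M -> R).
Hypothesis d_metric : is_metric d.

Lemma dist_refl (x : M) : d x x = 0.
Proof. exact (proj2 (proj1 d_metric x x) eq_refl). Qed.

Lemma dist_sym (x y : M) : d x y = d y x.
Proof. exact (proj1 (proj2 d_metric) x y). Qed.

Lemma dist_triangle (x y z : M) : d x z <= d x y + d y z.
Proof. exact (proj2 (proj2 d_metric) x y z). Qed.

Lemma dist_eq0 (x y : M) : d x y = 0 -> x = y.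
Proof. exact (proj1 (proj1 d_metric x y)). Qed.

Lemma dist_pos (x y : M) : x <> y -> 0 < d x y.
Proof.
  intros Hxy.
  assert (H0 : 0 <= d x y).
  { pose proof (dist_triangle x y x). rewrite dist_refl, (dist_sym y x) in H. lra. }
  destruct H0 as [H0 | H0]; [exact H0 |].
  exfalso; apply Hxy, dist_eq0; symmetry; exact H0.
Qed.

Lemma dist_le_trans_gap (D : R -> Prop) (r : R) :
  distance_set_is d D -> (forall t, r < t <= 2 * r -> ~ D t) ->
  forall x y z, d x y <= r -> d y z <= r -> d x z <= r.
Proof.
  intros Hdist Hgap x y z Hxy Hyz.
  destruct (Rle_dec (d x z) r) as [H | H]; [exact H |].
  exfalso; apply (Hgap (d x z)).
  - pose proof (dist_triangle x y z); lra.
  - apply Hdist; eauto.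
Qed.

Variable D : R -> Prop.
Hypotheses (d_dist_set : distance_set_is d D) (d_homogeneous : homogeneous d)
  (d_universal : universal_for d D).

Lemma parallelogram_completion_pos (x y z : M) :
  x <> y -> y <> z -> x <> z ->
  exists w, d x w = d y z /\ d w z = d x y.
Proof.
  intros Hxy Hyz Hxz.
  set (s := d x y); set (t := d x z); set (m := d y z).
  assert (Hfin : finite_metric_in D 4 (parallelogram_dist s t m)).
  { assert (HinD : forall u v, D (d u v)) by (intros u v; apply d_dist_set; eauto).
    apply parallelogram_dist_metric; try (apply dist_pos; assumption).
    - pose proof (dist_triangle x z y) as H; rewrite (dist_sym z y) in H; exact H.
    - apply dist_triangle.
    - pose proof (dist_triangle y x z) as H; rewrite (dist_sym y x) in H; exact H.
    - apply HinD.
    - apply HinD.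
    - apply HinD.
    - rewrite <- (dist_refl x); apply HinD. }
  destruct (d_universal 4%nat _ Hfin) as [f Hf].
  destruct (d_homogeneous (f 0%nat :: f 1%nat :: f 2%nat :: nil) (x :: y :: z :: nil)
              x eq_refl) as [g [[Hg _] Hgf]].
  { intros i j Hi Hj; simpl in Hi, Hj.
    destruct i as [|[|[|i]]]; try lia; destruct j as [|[|[|j]]]; try lia;
      simpl; rewrite Hf by lia; simpl;
      try apply dist_refl; try reflexivity; apply dist_sym. }
  exists (g (f 3%nat)).
  pose proof (Hgf 0%nat ltac:(simpl; lia)) as Gx.
  pose proof (Hgf 2%nat ltac:(simpl; lia)) as Gz.
  simpl in Gx, Gz.
  rewrite <- Gx, <- Gz, !Hg, !Hf by lia.
  split; reflexivity.
Qed.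

Lemma parallelogram_completion (x y z : M) :
  exists w, d x w = d y z /\ d w z = d x y.
Proof.
  destruct (classic (x = y)) as [<- | Hxy].
  { exists z; rewrite !dist_refl; split; reflexivity. }
  destruct (classic (y = z)) as [<- | Hyz].
  { exists x; rewrite !dist_refl; split; reflexivity. }
  destruct (classic (x = z)) as [<- | Hxz].
  { exists y; split; apply dist_sym. }
  apply parallelogram_completion_pos; assumption.
Qed.

End MetricSpace.

Theorem lemma3p3 (D : R -> Prop) (M : Type) (d : M -> M -> R) (r : R)
  (HD : universal_D D) (HM : in_U d D)
  (Hr : D r) (Hrpos : 0 < r)
  (Hgap : forall t, r < t <= 2 * r -> ~ D t)
  (a b c : M) (mAB mAC mBC : R) :
  is_dmin d (rclass d r a) (rclass d r b) mAB ->
  is_dmin d (rclass d r a) (rclass d r c) mAC ->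
  is_dmin d (rclass d r b) (rclass d r c) mBC ->
  mBC <= mAB + mAC.
Proof.
  destruct HM as [Hmet [_ [Hhom [Hdist Huniv]]]].
  pose proof (dist_le_trans_gap _ _ Hmet D r Hdist Hgap) as Htrans.
  intros [[a1 [b1 [Ha1 [Hb1 E1]]]] _] [[a2 [c2 [Ha2 [Hc2 E2]]]] _] [_ HBC].
  unfold rclass in *.
  destruct (parallelogram_completion _ _ Hmet D Hdist Hhom Huniv a1 a2 c2)
    as [w [Hw1 Hw2]].
  assert (Hwc : d w c <= r).
  { apply (Htrans _ c2 _); [rewrite Hw2 | exact Hc2].
    apply (Htrans _ a _); [exact Ha1 | rewrite dist_sym by exact Hmet; exact Ha2]. }
  pose proof (HBC b1 w Hb1 Hwc) as Hmin.
  pose proof (dist_triangle _ _ Hmet b1 a1 w) as Htri.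
  rewrite (dist_sym _ _ Hmet b1 a1) in Htri.
  lra.
Qed.
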